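(* Let $D=(Q,\Sigma,\delta,q_0,A)$ and $D'=(Q',\Sigma,\delta',q_0',A')$ be DFAs over the same alphabet with $L(D)\sim L(D')$. Then $S(D)=S(D')$.
   Context: All DFAs are complete and all states are reachable from the start state. For languages, $L\sim L'$ means the symmetric difference $L\triangle L'$ is finite; this is an equivalence relation, and $[L]$ denotes the equivalence class (language-class) of $L$. For a state $q$ of a DFA $D=(Q,\Sigma,\delta,q_0,A)$, the \emph{induced language} $L(q)$ is the language recognized by $(Q,\Sigma,\delta,q,A)$. Define $S(D)=\{[L(q)]: q\in Q\}$. *)

From mathcomp Require Import all_boot.
Set Implicit Arguments. Unset Strict Implicit. Unset Printing Implicit Defensive.

Definition word (Sigma : finType) := seq Sigma.
Definition language (Sigma : finType) := word Sigma -> Prop.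

Record DFA (Sigma : finType) := MkDFA {
  state : finType;
  delta : state -> Sigma -> state;
  start : state;
  accept : {set state}
}.

Definition run (Sigma : finType) (D : DFA Sigma) (q : state D) (w : word Sigma)
  : state D := foldl (@delta Sigma D) q w.

Definition induced (Sigma : finType) (D : DFA Sigma) (q : state D) : language Sigma :=
  fun w => run q w \in accept D.

Definition lang (Sigma : finType) (D : DFA Sigma) : language Sigma :=
  induced (start D).

Definition all_reachable (Sigma : finType) (D : DFA Sigma) : Prop :=
  forall q : state D, exists w : word Sigma, run (start D) w = q.

Definition finite_lang (Sigma : finType) (L : language Sigma) : Prop :=
  exists l : seq (word Sigma), forall w, L w -> w \in l.

Definition symdiff (Sigma : finType) (L L' : language Sigma) : language Sigma :=
  fun w => (L w /\ ~ L' w) \/ (L' w /\ ~ L w).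

Definition sim (Sigma : finType) (L L' : language Sigma) : Prop :=
  finite_lang (symdiff L L').

Definition lclass (Sigma : finType) (L : language Sigma) : language Sigma -> Prop :=
  fun L' => sim L L'.

Definition S (Sigma : finType) (D : DFA Sigma) : (language Sigma -> Prop) -> Prop :=
  fun C => exists q : state D, C = lclass (induced q).

From mathcomp Require Import all_boot.
From Stdlib Require Import Classical FunctionalExtensionality PropExtensionality.
Set Implicit Arguments. Unset Strict Implicit.

(* A state reached by a word w induces the left quotient of L(D) by w, and
   taking left quotients preserves finiteness of the symmetric difference
   (drop the prefix w from each word of the finite witness list). Hence if
   q = run q0 w then [L(q)] = [L(run q0' w)], so S(D) is contained in S(D'),
   and symmetrically. *)

Definition lquot (Sigma : finType) (w : word Sigma) (L : language Sigma)
  : language Sigma := fun u => L (w ++ u).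

Lemma sim_sym (Sigma : finType) (L L' : language Sigma) : sim L L' -> sim L' L.
Proof.
move=> [l Hl]; exists l => w Hw; apply: Hl.
by case: Hw => [[? ?]|[? ?]]; [right|left].
Qed.

Lemma sim_trans (Sigma : finType) (L1 L2 L3 : language Sigma) :
  sim L1 L2 -> sim L2 L3 -> sim L1 L3.
Proof.
move=> [l1 H1] [l2 H2]; exists (l1 ++ l2) => w Hw; rewrite mem_cat; apply/orP.
case: (classic (L2 w)) => L2w; case: Hw => [[? ?]|[? ?]].
- by right; apply: H2; left.
- by left; apply: H1; right.
- by left; apply: H1; left.
- by right; apply: H2; right.
Qed.

Lemma lclass_sim (Sigma : finType) (L L' : language Sigma) :
  sim L L' -> lclass L = lclass L'.
Proof.
move=> HL; apply: functional_extensionality => M.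
apply: propositional_extensionality; split.
- exact: sim_trans (sim_sym HL).
- exact: sim_trans HL.
Qed.

Lemma sim_lquot (Sigma : finType) (w : word Sigma) (L L' : language Sigma) :
  sim L L' -> sim (lquot w L) (lquot w L').
Proof.
move=> [l Hl]; exists [seq drop (size w) v | v <- l] => u Hu.
apply/mapP; exists (w ++ u); first exact: Hl.
by rewrite drop_size_cat.
Qed.

Lemma run_cat (Sigma : finType) (D : DFA Sigma) (q : state D) (w u : word Sigma) :
  run q (w ++ u) = run (run q w) u.
Proof. by rewrite /run foldl_cat. Qed.

Lemma lquot_induced (Sigma : finType) (D : DFA Sigma) (q : state D) (w : word Sigma) :
  lquot w (induced q) = induced (run q w).
Proof.
by apply: functional_extensionality => u; rewrite /lquot /induced run_cat.
Qed.

Lemma S_sub (Sigma : finType) (D D' : DFA Sigma) (C : language Sigma -> Prop) :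
  all_reachable D -> sim (lang D) (lang D') -> S D C -> S D' C.
Proof.
move=> reachD simDD' [q ->]; have [w <-] := reachD q.
exists (run (start D') w); apply: lclass_sim.
by rewrite -!lquot_induced; apply: sim_lquot.
Qed.

Theorem mainTheorem3 (Sigma : finType) (D D' : DFA Sigma) :
  all_reachable D -> all_reachable D' ->
  sim (lang D) (lang D') ->
  S D = S D'.
Proof.
move=> reachD reachD' simDD'; apply: functional_extensionality => C.
apply: propositional_extensionality; split.
- exact: S_sub.
- exact: S_sub (sim_sym simDD').
Qed.
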